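(* Let $M$ be a connected smooth Riemannian manifold. Let $\omega\in W(\hat M)$ be such that, if $\alpha_M(\omega)<\infty$, then $\omega(t)=\infty_M$ for all $t\ge\alpha_M(\omega)$. Let $\Omega\subset M$ be open and let $\Omega_n\subset\Omega$, $n\in\mathbb N$, be open with $\Omega_n\subset\Omega_{n+1}$, $\omega(0)\in\Omega_1$ and $\bigcup_n\Omega_n=\Omega$. (a) $\alpha_{\Omega_n}(\omega)\nearrow\alpha_\Omega(\omega)$ as $n\to\infty$. (b) If in addition for each $n$ there is an open $\Upsilon_n\subset M$ with $\Upsilon_n\cap\Omega=\Omega_n$ and $\overline\Omega=\bigcup_n(\overline\Omega\cap\Upsilon_n)$, then $\beta_{\Omega_n}(\omega)\nearrow\beta_\Omega(\omega)$ as $n\to\infty$.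
   Context: $\hat M=M\cup\{\infty_M\}$ is the one-point compactification if $M$ is noncompact, $\hat M=M$ if compact; $W(\hat M)$ is the space of continuous paths $[0,\infty)\to\hat M$, and $\mathbb X_t(\omega)=\omega(t)$. For $U\subset\hat M$ open: $\alpha_U(\omega)=\inf\{t>0:\omega(t)\in\hat M\setminus U\}$ and $\beta_U(\omega)=\inf\{t>0:\int_0^t1_{\hat M\setminus U}(\omega(s))ds>0\}$, with $\inf\emptyset=\infty$. Closures $\overline\Omega$ are taken in $M$. *)

From HB Require Import structures.
From mathcomp Require Import all_boot all_order all_algebra.
From mathcomp Require Import all_classical all_reals all_analysis.
Set Implicit Arguments. Unset Strict Implicit. Unset Printing Implicit Defensive.
Import Order.TTheory GRing.Theory Num.Theory.
Import numFieldNormedType.Exports.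
Local Open Scope classical_set_scope.
Local Open Scope ring_scope.

(* The one-point compactification \hat M of M (library: option M, with None =
   the point at infinity \infty_M). *)
Notation hatM M := (one_point_compactification M).

Definition inhat {M : topologicalType} (U : set M) : set (hatM M) := Some @` U.

(* W(\hat M): continuous paths [0,oo) -> \hat M (represented as functions on R
   whose restriction to [0,oo) is continuous; values at t<0 are irrelevant). *)
Definition path_space (R : realType) (M : topologicalType) (w : R -> hatM M) :=
  {within `[0, +oo[%classic, continuous w}.

Definition alpha (R : realType) (M : topologicalType) (U : set (hatM M))
    (w : R -> hatM M) : \bar R :=
  ereal_inf [set t%:E | t in [set t : R | 0 < t /\ ~ U (w t)]].

Definition beta (R : realType) (M : topologicalType) (U : set (hatM M))
    (w : R -> hatM M) : \bar R :=
  ereal_inf [set t%:E | t in [set t : R | 0 < t /\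
     (0%E < \int[@lebesgue_measure R]_(s in `[0%R, t]%classic) (\1_(~` U) (w s))%:E)%E]].

(* Before alpha_Omega the path stays in Omega, so for T < alpha_Omega the
   compact set w([0,T]) is covered by the increasing open sets Omega_n and lies
   in a single one of them, which forces alpha_(Omega_n) >= T.
   Before beta_Omega the path spends almost all of its time in Omega, hence it
   visits Omega at times arbitrarily close to the right of every s, and by
   continuity w(s) lies in the closure of Omega; it cannot be at infinity,
   where it would stay absorbed. For T < beta_Omega, compactness of w([0,T])
   in the union of the Upsilon_n leaves finitely many Upsilon_i, and since
   Upsilon_i meets Omega exactly in Omega_i, on [0,T] the path is in Omega_N
   whenever it is in Omega, which forces beta_(Omega_N) >= T. *)

From HB Require Import structures.
From mathcomp Require Import all_boot all_order all_algebra.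
From mathcomp Require Import all_classical all_reals all_analysis.
From mathcomp Require Import lra.

Set Implicit Arguments.
Unset Strict Implicit.
Unset Printing Implicit Defensive.
Import Order.TTheory GRing.Theory Num.Theory.
Import numFieldNormedType.Exports.
Local Open Scope classical_set_scope.
Local Open Scope ring_scope.

Lemma lte_EFin_between (R : realType) (x y : \bar R) : (x < y)%E ->
  exists2 r : R, (x < r%:E)%E & (r%:E < y)%E.
Proof.
case: x => [x| |]; case: y => [y| |] //=.
- by rewrite lte_fin => xy; exists ((x + y) / 2); rewrite lte_fin; lra.
- by exists (x + 1); rewrite ?ltry // lte_fin; lra.
- by exists (y - 1); rewrite ?ltNyr // lte_fin; lra.
- by exists 0; rewrite ?ltNyr ?ltry.
Qed.

Lemma nondecreasing_cvgn_approx (R : realType) (u : (\bar R)^nat) (a : \bar R) :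
  {homo u : m n / (m <= n)%N >-> (m <= n)%E} -> (forall n, (u n <= a)%E) ->
  (forall r : R, (r%:E < a)%E -> exists n, (r%:E <= u n)%E) ->
  u @ \oo --> a.
Proof.
move=> u_nd ua u_approx.
suff <- : ereal_sup (range u) = a by exact: ereal_nondecreasing_cvgn.
apply/le_anti/andP; split; first by apply: ge_ereal_sup => _ [n _ <-].
rewrite leNgt; apply/negP => /lte_EFin_between[r supr ra].
have [n rn] := u_approx r ra.
have : (u n <= ereal_sup (range u))%E by apply: ereal_sup_ubound; exists n.
by move/(le_trans rn); rewrite leNgt supr.
Qed.

Lemma ge0_le_integral_nonmeasurable d (T : measurableType d) (R : realType)
    (mu : {measure set T -> \bar R}) (D : set T) (f g : T -> \bar R) :
  (forall x, D x -> (0 <= f x)%E) -> (forall x, D x -> (f x <= g x)%E) ->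
  (\int[mu]_(x in D) f x <= \int[mu]_(x in D) g x)%E.
Proof.
move=> f0 fg.
have g0 x : D x -> (0 <= g x)%E by move=> Dx; exact: le_trans (f0 x Dx) (fg x Dx).
rewrite !ge0_integralE//; apply: ereal_sup_le => _ [h hf <-]; exists h => //= x.
exact: le_trans (hf x) (lee_restrict fg x).
Qed.

Lemma compact_bigcup_open_bounded (X : ptopologicalType) (K : set X)
    (U : nat -> set X) :
  compact K -> (forall n, open (U n)) -> K `<=` \bigcup_n U n ->
  exists N, K `<=` \bigcup_(i < N) U i.
Proof.
rewrite compact_cover => cK U_open KU.
have [D _ KD] := cK nat setT U (fun n _ => U_open n) KU.
exists (\max_(i <- finmap.enum_fset D) i).+1 => x /KD[i Di Uix]; exists i => //=.
by rewrite ltnS; exact: (@leq_bigmax_seq _ _ xpredT id i Di).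
Qed.

Lemma compact_nondecreasing_open_cover (X : ptopologicalType) (K : set X)
    (U : nat -> set X) :
  compact K -> (forall n, open (U n)) ->
  {homo U : m n / (m <= n)%N >-> m `<=` n} ->
  K `<=` \bigcup_n U n -> exists N, K `<=` U N.
Proof.
move=> cK U_open U_nd /(compact_bigcup_open_bounded cK U_open)[N KN].
by exists N => x /KN[i /= /ltnW iN]; apply: U_nd.
Qed.

Section continuous_paths.
Variables (R : realType) (X : topologicalType) (w : R -> X).
Hypothesis w_cont : {within `[0, +oo[%classic, continuous w}.

Lemma path_segment_compact (T : R) : compact (w @` `[0, T]).
Proof.
apply: continuous_compact; last exact: segment_compact.
by apply: continuous_subspaceW w_cont => t /=; rewrite !in_itv /= => /andP[->].
Qed.

Lemma path_near (s : R) (B : set X) : 0 <= s -> nbhs (w s) B ->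
  exists2 d, 0 < d & forall t, 0 <= t -> `|s - t| < d -> B (w t).
Proof.
move=> s0 Bws; have /subspace_continuousP := w_cont.
move=> /(_ s _ B Bws); rewrite /= in_itv /= s0 => /(_ isT).
move=> /nbhs_ballP [d d0 Hd]; exists d => // t t0 st; apply: Hd.
  by rewrite /ball /=.
by rewrite /= in_itv /= t0.
Qed.

Lemma path_closure_right (A : set X) (s c : R) : 0 <= s -> s < c ->
  (forall b, s < b <= c -> exists2 t, s <= t <= b & A (w t)) ->
  closure A (w s).
Proof.
move=> s0 sc visits B /(path_near s0)[d d0 near_s].
have [|t /andP[st tb] Awt] := visits (Order.min (s + d / 2) c).
  by rewrite lt_min ge_min lexx orbT andbT sc; lra.
exists (w t); split => //; apply: near_s; first lra.
by move: tb; rewrite le_min => /andP[tb _]; rewrite ler0_norm; lra.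
Qed.

End continuous_paths.

Lemma closure_inhat (M : topologicalType) (A : set M) (x : M) :
  closure (inhat A) (Some x) -> closure A x.
Proof.
move=> clAx B /one_point_compactification_some_nbhs/clAx.
by move=> [_ [[y Ay <-] [z Bz [zy]]]]; exists y; split => //; rewrite -zy.
Qed.

Section exit_times.
Variables (R : realType) (M : topologicalType) (w : R -> hatM M).
Implicit Types (U V : set (hatM M)) (a b s t T : R).

Lemma alpha_ge0 U : (0 <= alpha U w)%E.
Proof. by apply: le_ereal_inf_tmp => _ [t [t0 _] <-]; rewrite lee_fin ltW. Qed.

Lemma alphaS U V : U `<=` V -> (alpha U w <= alpha V w)%E.
Proof.
move=> UV; apply: ereal_inf_le_tmp => _ [t [t0 nVwt] <-].
by exists t => //; split => // /UV.
Qed.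

Lemma alpha_le_exit U t : 0 < t -> ~ U (w t) -> (alpha U w <= t%:E)%E.
Proof. by move=> t0 nUwt; apply: ereal_inf_lbound; exists t. Qed.

Lemma alpha_ge U T : (forall t, 0 < t <= T -> U (w t)) -> (T%:E <= alpha U w)%E.
Proof.
move=> stay; apply: le_ereal_inf_tmp => _ [t [t0 nUwt] <-].
by rewrite lee_fin leNgt; apply/negP => tT; apply/nUwt/stay; rewrite t0 ltW.
Qed.

Definition occupation U t : \bar R :=
  \int[@lebesgue_measure R]_(s in `[0%R, t]%classic) (\1_(~` U) (w s))%:E.

Lemma le_occupation U V t : (forall s, 0 <= s <= t -> U (w s) -> V (w s)) ->
  (occupation V t <= occupation U t)%E.
Proof.
move=> UV; apply: ge0_le_integral_nonmeasurable => s; first by rewrite lee_fin.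
rewrite /= in_itv /= => st; rewrite lee_fin !indicE ler_nat.
by case: (boolP (w s \in ~` V)) => // /set_mem nVws; rewrite mem_set // => /(UV s st).
Qed.

Lemma occupation_gt0 U a b t : 0 <= a -> a < b -> b <= t ->
  (forall s, a <= s <= b -> ~ U (w s)) -> (0 < occupation U t)%E.
Proof.
move=> a0 ab bt away.
have ab_sub : `[a, b]%classic `<=` `[0, t]%classic.
  by move=> s; rewrite /= !in_itv /= => /andP[a_s s_b]; apply/andP; split; lra.
have ab_pos : (0 < \int[@lebesgue_measure R]_(s in `[0%R, t]%classic)
                        (\1_(`[a, b]%classic) s)%:E)%E.
  rewrite integral_indic //= setIidl // lebesgue_measure_itv /= lte_fin ab.
  by rewrite -EFinD lte_fin; lra.
apply: lt_le_trans ab_pos _.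
apply: ge0_le_integral_nonmeasurable => s _; first by rewrite lee_fin.
rewrite lee_fin !indicE ler_nat.
case: (boolP (s \in `[a, b]%classic)) => // /set_mem/=; rewrite in_itv /= => sab.
by rewrite mem_set //; exact: away.
Qed.

Lemma beta_ge0 U : (0 <= beta U w)%E.
Proof. by apply: le_ereal_inf_tmp => _ [t [t0 _] <-]; rewrite lee_fin ltW. Qed.

Lemma betaS U V : U `<=` V -> (beta U w <= beta V w)%E.
Proof.
move=> UV; apply: ereal_inf_le_tmp => _ [t [t0 occ] <-]; exists t => //.
by split => //; apply: lt_le_trans occ _; apply: le_occupation => s _ /UV.
Qed.

Lemma beta_le_occupied U t : 0 < t -> (0 < occupation U t)%E ->
  (beta U w <= t%:E)%E.
Proof. by move=> t0 occ; apply: ereal_inf_lbound; exists t. Qed.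

Lemma occupation_before_beta U t : 0 < t -> (t%:E < beta U w)%E ->
  (occupation U t <= 0)%E.
Proof.
move=> t0 tb; rewrite leNgt; apply/negP => /(beta_le_occupied t0).
by rewrite leNgt tb.
Qed.

Lemma beta_ge U T : (forall t, 0 < t <= T -> (occupation U t <= 0)%E) ->
  (T%:E <= beta U w)%E.
Proof.
move=> idle; apply: le_ereal_inf_tmp => _ [t [t0 occ] <-].
by rewrite lee_fin leNgt; apply/negP => tT; move: occ; rewrite ltNge idle // t0 ltW.
Qed.

Lemma visit_before_beta U a b : 0 <= a < b -> (b%:E < beta U w)%E ->
  exists2 t, a <= t <= b & U (w t).
Proof.
move=> /andP[a0 ab] bb; apply: contrapT => no_visit.
have := occupation_before_beta (le_lt_trans a0 ab) bb; rewrite leNgt => /negP; apply.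
by apply: (occupation_gt0 a0 ab (lexx b)) => s sab Uws; apply: no_visit; exists s.
Qed.

End exit_times.

Section exhaustion.
Variables (R : realType) (M : topologicalType) (w : R -> hatM M).
Hypothesis w_cont : path_space w.

Lemma alpha_exhaustion (Omega : set M) (Om : nat -> set M) :
  (forall n, open (Om n)) -> {homo Om : m n / (m <= n)%N >-> m `<=` n} ->
  \bigcup_n Om n = Omega -> inhat Omega (w 0) ->
  forall T : R, (T%:E < alpha (inhat Omega) w)%E ->
  exists n, (T%:E <= alpha (inhat (Om n)) w)%E.
Proof.
move=> Om_open Om_nd Om_cover w0 T Ta.
have [T0|T_pos] := leP T 0.
  by exists 0%N; apply: le_trans (alpha_ge0 _ _); rewrite lee_fin.
have stay t : 0 <= t <= T -> inhat Omega (w t).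
  rewrite le_eqVlt => /andP[/orP[/eqP<-//|t_pos] tT]; apply: contrapT.
  by move/(alpha_le_exit t_pos)/(lt_le_trans Ta); rewrite lte_fin; lra.
have [N wN] : exists N, w @` `[0, T] `<=` inhat (Om N).
  apply: compact_nondecreasing_open_cover.
  - exact: path_segment_compact.
  - by move=> n; exact: one_point_compactification_open_some.
  - by move=> m n /Om_nd; exact: image_subset.
  move=> _ [t tT <-]; rewrite /= in_itv /= in tT.
  have [x] := stay t tT; rewrite -Om_cover => -[n _ Omx] <-.
  by exists n => //; exists x.
exists N; apply: alpha_ge => t /andP[t_pos tT]; apply: wN; exists t => //=.
by rewrite in_itv /= ltW.
Qed.

Hypothesis w_absorbed : (alpha (inhat [set: M]) w < +oo)%E ->
  forall t : R, (alpha (inhat [set: M]) w <= t%:E)%E -> w t = None.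
Hypothesis w0_finite : w 0 <> None.

Lemma before_beta_in_closure (A : set M) (s : R) : 0 <= s ->
  (s%:E < beta (inhat A) w)%E -> exists2 x, w s = Some x & closure A x.
Proof.
move=> s0 sb; have [c sc cb] := lte_EFin_between sb; rewrite lte_fin in sc.
have visits b : s < b <= c -> exists2 t, s <= t <= b & inhat A (w t).
  move=> /andP[s_b b_c]; apply: visit_before_beta; first by rewrite s0.
  by apply: le_lt_trans cb; rewrite lee_fin.
case ws : (w s) => [x|].
  exists x => //; apply: closure_inhat; rewrite -ws.
  exact: path_closure_right w_cont _ _ _ s0 sc visits.
have s_pos : 0 < s.
  by rewrite lt_neqAle s0 andbT; apply/eqP => s_eq0; apply: w0_finite; rewrite s_eq0.
have alpha_s : (alpha (inhat [set: M]) w <= s%:E)%E.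
  by apply: alpha_le_exit => //; rewrite ws => -[].
have [|t /andP[st _]] := visits c; first by rewrite sc lexx.
rewrite w_absorbed ?(le_lt_trans alpha_s) ?ltry // => [[] //|].
by apply: le_trans alpha_s _; rewrite lee_fin.
Qed.

Lemma beta_exhaustion (Omega : set M) (Om Ups : nat -> set M) :
  {homo Om : m n / (m <= n)%N >-> m `<=` n} -> (forall n, open (Ups n)) ->
  (forall n, Ups n `&` Omega = Om n) -> closure Omega `<=` \bigcup_n Ups n ->
  forall T : R, (T%:E < beta (inhat Omega) w)%E ->
  exists n, (T%:E <= beta (inhat (Om n)) w)%E.
Proof.
move=> Om_nd Ups_open UpsE clOmega T Tb.
have [T0|T_pos] := leP T 0.
  by exists 0%N; apply: le_trans (beta_ge0 _ _); rewrite lee_fin.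
have [N wN] : exists N, w @` `[0, T] `<=` \bigcup_(i < N) inhat (Ups i).
  apply: compact_bigcup_open_bounded.
  - exact: path_segment_compact.
  - by move=> n; exact: one_point_compactification_open_some.
  move=> _ [s sT <-]; rewrite /= in_itv /= in sT; case/andP: sT => s0 sT.
  have [|x -> /clOmega[n _ Ups_x]] := before_beta_in_closure (A := Omega) s0.
    by apply: le_lt_trans Tb; rewrite lee_fin.
  by exists n => //; exists x.
have stay_N s : 0 <= s <= T -> inhat Omega (w s) -> inhat (Om N) (w s).
  move=> sT [x Omega_x wsx].
  have [|i /= iN [y Ups_y wsy]] := wN (w s); first by exists s.
  rewrite -wsx; exists x => //; apply: (Om_nd i); first exact: ltnW.
  by rewrite -UpsE; split => //; move: wsy; rewrite -wsx => -[<-].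
exists N; apply: beta_ge => t /andP[t_pos tT].
apply: le_trans (occupation_before_beta t_pos _); last first.
  by apply: le_lt_trans Tb; rewrite lee_fin.
apply: le_occupation => s /andP[s0 st]; apply: stay_N.
by rewrite s0 (le_trans st).
Qed.

End exhaustion.

Theorem mainTheorem4 (R : realType) (M : topologicalType)
    (M_hausdorff : hausdorff_space M)
    (M_loc_compact : locally_compact [set: M])
    (M_second_countable : @second_countable M)
    (M_connected : connected [set: M])
    (w : R -> hatM M) (w_cont : path_space w)
    (w_absorbed : (alpha (inhat [set: M]) w < +oo)%E ->
        forall t : R, (alpha (inhat [set: M]) w <= t%:E)%E -> w t = None)
    (Omega : set M) (Omega_open : open Omega)
    (Om : nat -> set M) (Om_open : forall n, open (Om n))
    (Om_sub : forall n, Om n `<=` Omega)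
    (Om_incr : forall n, Om n `<=` Om n.+1)
    (w0 : exists x0, Om 0%N x0 /\ w 0 = Some x0)
    (Om_cover : \bigcup_n Om n = Omega) :
  ({homo (fun n => alpha (inhat (Om n)) w) : m n / (m <= n)%N >-> (m <= n)%E}
   /\ (fun n => alpha (inhat (Om n)) w) @ \oo --> alpha (inhat Omega) w)
  /\
  ((exists Ups : nat -> set M,
      (forall n, open (Ups n)) /\ (forall n, Ups n `&` Omega = Om n) /\
      closure Omega = \bigcup_n (closure Omega `&` Ups n)) ->
   {homo (fun n => beta (inhat (Om n)) w) : m n / (m <= n)%N >-> (m <= n)%E}
   /\ (fun n => beta (inhat (Om n)) w) @ \oo --> beta (inhat Omega) w).
Proof.
have Om_nd : {homo Om : m n / (m <= n)%N >-> m `<=` n}.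
  apply: (@homo_leq _ Om subset) => //; first exact: subset_refl.
  by move=> B A C; exact: subset_trans.
have [x0 [Om0_x0 w0_x0]] := w0.
split.
  have alpha_nd : {homo (fun n => alpha (inhat (Om n)) w) :
      m n / (m <= n)%N >-> (m <= n)%E}.
    by move=> m n /Om_nd mn; apply/alphaS/image_subset.
  split => //; apply: nondecreasing_cvgn_approx => // [n|].
    exact/alphaS/image_subset/Om_sub.
  apply: alpha_exhaustion => //; rewrite w0_x0; exists x0 => //.
  exact: Om_sub Om0_x0.
move=> [Ups [Ups_open [UpsE clOmegaE]]].
have beta_nd : {homo (fun n => beta (inhat (Om n)) w) :
    m n / (m <= n)%N >-> (m <= n)%E}.
  by move=> m n /Om_nd mn; apply/betaS/image_subset.
split => //; apply: nondecreasing_cvgn_approx => // [n|].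
  exact/betaS/image_subset/Om_sub.
have w0_finite : w 0 <> None by rewrite w0_x0.
apply: (beta_exhaustion w_cont w_absorbed w0_finite Om_nd Ups_open UpsE).
by rewrite clOmegaE => x [n _ [_ Ups_x]]; exists n.
Qed.
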